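(* For positive integers $f,d$ with $f\mid d$, we have $R_q(d)\ge R_q(f)$.
   Context: Let $\mathbb{F}_q$ be a finite field. For a positive integer $d$, let $\mathbf{E}_d$ be the elliptic curve $y^2+xy=x^3-t^d$ over $\mathbb{F}_q(t)$ and $R_q(d)$ the rank of the Mordell–Weil group $\mathbf{E}_d(\mathbb{F}_q(t))$. *)

From HB Require Import structures.
From mathcomp Require Import all_boot all_order all_algebra all_field.
From mathcomp Require Import fraction.
Set Implicit Arguments. Unset Strict Implicit. Unset Printing Implicit Defensive.
Import GRing.Theory.
Local Open Scope ring_scope.

Definition ratfun (F : fieldType) := {fraction {poly F}}.

Definition tvar (F : fieldType) : ratfun F := FracField.tofrac 'X.

Section WeierstrassE.
Variables (F : fieldType) (d : nat).
Local Notation K := (ratfun F).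

(* E_d : y^2 + x y = x^3 - t^d, i.e. the general Weierstrass equation
   y^2 + a1 x y + a3 y = x^3 + a2 x^2 + a4 x + a6 with
   a1 = 1, a3 = 0, a2 = 0, a4 = 0, a6 = - t^d. *)
Definition a6 : K := - (tvar F) ^+ d.

(* Points of E_d over K: None is the point at infinity O, Some (x,y) an
   affine point. *)
Definition on_curve (P : option (K * K)) : Prop :=
  match P with
  | None => True
  | Some (x, y) => y ^+ 2 + x * y = x ^+ 3 + a6
  end.

(* Group law (chord-tangent), Silverman III.2.3 with a1 = 1, a2=a3=a4=0. *)
Definition ec_neg (P : option (K * K)) : option (K * K) :=
  match P with
  | None => None
  | Some (x, y) => Some (x, - y - x)
  end.

Definition ec_add (P Q : option (K * K)) : option (K * K) :=
  match P, Q with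
  | None, _ => Q
  | _, None => P
  | Some (x1, y1), Some (x2, y2) =>
      if (x1 == x2) && (y1 + y2 + x2 == 0) then None
      else
        let lam := if x1 != x2 then (y2 - y1) / (x2 - x1)
                   else (3%:R * x1 ^+ 2 - y1) / (2%:R * y1 + x1) in
        let nu := if x1 != x2 then (y1 * x2 - y2 * x1) / (x2 - x1)
                  else (- x1 ^+ 3 + 2%:R * a6) / (2%:R * y1 + x1) in
        let x3 := lam ^+ 2 + lam - x1 - x2 in
        Some (x3, - (lam + 1) * x3 - nu)
  end.

Definition ec_mul (n : int) (P : option (K * K)) : option (K * K) :=
  match n with
  | Posz m => iter m (ec_add P) None
  | Negz m => ec_neg (iter m.+1 (ec_add P) None)
  end.

Definition ec_lincomb (n : nat) (c : 'I_n -> int) (P : 'I_n -> option (K * K)) :=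
  foldr (fun i acc => ec_add (ec_mul (c i) (P i)) acc) None (enum 'I_n).

Definition independent_family (n : nat) (P : 'I_n -> option (K * K)) : Prop :=
  (forall i, on_curve (P i)) /\
  (forall c : 'I_n -> int, ec_lincomb c P = None -> forall i, c i = 0).

(* rank E_d(K) >= n  (the rank is the supremum of such n). *)
Definition rank_ge (n : nat) : Prop :=
  exists P : 'I_n -> option (K * K), independent_family P.

End WeierstrassE.

(* The substitution t |-> t^e is a field endomorphism of F(t) carrying
   -t^f to -t^(e f).  Field morphisms commute with the chord-tangent
   formulas, so applied coordinatewise it maps E_f(F(t)) homomorphically
   into E_(e f)(F(t)); being injective, it keeps independent points
   independent.  For f | d take e = d / f. *)
From HB Require Import structures.
From mathcomp Require Import all_boot all_order all_algebra all_field.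
From mathcomp Require Import fraction generic_quotient.
Set Implicit Arguments. Unset Strict Implicit. Unset Printing Implicit Defensive.
Import GRing.Theory.
Local Open Scope ring_scope.

Section FracLift.
Variables (R : idomainType) (L : fieldType) (g : {rmorphism R -> L}).
Hypothesis g_inj : injective g.
Local Notation tofrac := (@FracField.tofrac R).

Lemma tofrac_numden (x : {fraction R}) :
  x = tofrac \n_(repr x) / tofrac \d_(repr x).
Proof.
have d_neq0 := denom_ratioP (repr x).
apply: (@mulIf _ (tofrac \d_(repr x))); first by rewrite tofrac_eq0.
rewrite mulfVK ?tofrac_eq0 // -[X in X * _](reprK x).
unlock FracField.tofrac; rewrite -[_ * _]FracField.pi_mul; apply/eqmodP.
rewrite /= FracField.equivfE /FracField.mulf.
by rewrite !numden_Ratio ?mulf_neq0 ?oner_neq0 // !mulr1 mulrC.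
Qed.

Lemma tofrac_divP (x : {fraction R}) :
  exists a b, b != 0 /\ x = tofrac a / tofrac b.
Proof.
by exists \n_(repr x), \d_(repr x); split; [exact: denom_ratioP | exact: tofrac_numden].
Qed.

Lemma rmorph_inj_neq0 b : b != 0 -> g b != 0.
Proof. by rewrite -(rmorph0 g) (inj_eq g_inj). Qed.

Definition frac_lift (x : {fraction R}) : L := g \n_(repr x) / g \d_(repr x).

Lemma frac_lift_div a b : b != 0 -> frac_lift (tofrac a / tofrac b) = g a / g b.
Proof.
move=> b_neq0; rewrite /frac_lift; set x := tofrac a / tofrac b.
have d_neq0 := denom_ratioP (repr x).
have x_numden := tofrac_numden x.
set n := \n_(repr x) in x_numden *; set d := \d_(repr x) in d_neq0 x_numden *.
have cross : tofrac (n * b) = tofrac (a * d).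
  rewrite !rmorphM /= -[tofrac n](mulfVK (_ : tofrac d != 0)) ?tofrac_eq0 //.
  by rewrite -x_numden /x mulrAC divfK ?tofrac_eq0.
move/eqP: cross; rewrite tofrac_eq => /eqP /(congr1 g); rewrite !rmorphM /= => cross.
by apply/eqP; rewrite eqr_div ?rmorph_inj_neq0 // cross.
Qed.

Lemma frac_lift_is_zmod_morphism : zmod_morphism frac_lift.
Proof.
move=> x y.
have [a [b [b_neq0 ->]]] := tofrac_divP x; have [c [e [e_neq0 ->]]] := tofrac_divP y.
have gb_neq0 := rmorph_inj_neq0 b_neq0; have ge_neq0 := rmorph_inj_neq0 e_neq0.
rewrite !frac_lift_div // -mulNr -tofracN addf_div ?tofrac_eq0 //.
rewrite -!tofracM -tofracD frac_lift_div ?mulf_neq0 //.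
by rewrite -mulNr -rmorphN addf_div // rmorphD !rmorphM.
Qed.

Lemma frac_lift_is_monoid_morphism : monoid_morphism frac_lift.
Proof.
split.
  by rewrite -[1]divr1 -(rmorph1 tofrac) frac_lift_div ?oner_neq0 // rmorph1 divr1.
move=> x y.
have [a [b [b_neq0 ->]]] := tofrac_divP x; have [c [e [e_neq0 ->]]] := tofrac_divP y.
by rewrite mulf_div -!rmorphM !frac_lift_div ?mulf_neq0 // !rmorphM mulf_div.
Qed.

Lemma frac_lift_tofrac a : frac_lift (tofrac a) = g a.
Proof.
by rewrite -[tofrac a]divr1 -(rmorph1 tofrac) frac_lift_div ?oner_neq0 // rmorph1 divr1.
Qed.

End FracLift.

Section MapPoint.
Variables (F : fieldType) (f d : nat) (sigma : {rmorphism ratfun F -> ratfun F}).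
Hypothesis sigma_a6 : sigma (a6 F f) = a6 F d.

Definition map_point (P : option (ratfun F * ratfun F)) :=
  omap (fun xy => (sigma xy.1, sigma xy.2)) P.

Lemma map_point_on_curve P : on_curve f P -> on_curve d (map_point P).
Proof.
case: P => [[x y]|] //= /(congr1 sigma).
by rewrite -sigma_a6 !(rmorphD, rmorphXn, rmorphM).
Qed.

Lemma map_point_neg P : map_point (ec_neg P) = ec_neg (map_point P).
Proof. by case: P => [[x y]|] //=; rewrite rmorphB rmorphN. Qed.

Lemma map_point_add P Q :
  map_point (ec_add f P Q) = ec_add d (map_point P) (map_point Q).
Proof.
case: P => [[x1 y1]|] //; case: Q => [[x2 y2]|] //=.
have -> : (sigma x1 == sigma x2) = (x1 == x2) := fmorph_eq sigma x1 x2.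
have -> : (sigma y1 + sigma y2 + sigma x2 == 0) = (y1 + y2 + x2 == 0).
  by rewrite -!rmorphD fmorph_eq0.
case: ifP => _ //=; case: ifP => _ /=; congr (Some (_, _)).
all: by rewrite -?sigma_a6
  ?(rmorph_nat, rmorph1, rmorphXn, rmorphB, rmorphD, rmorphN, rmorphM, fmorphV).
Qed.

Lemma map_point_mul n P : map_point (ec_mul f n P) = ec_mul d n (map_point P).
Proof.
have map_iter m :
    map_point (iter m (ec_add f P) None) = iter m (ec_add d (map_point P)) None.
  by elim: m => [|m IHm] //=; rewrite map_point_add IHm.
by case: n => m; rewrite /ec_mul ?map_point_neg map_iter.
Qed.

Lemma map_point_lincomb n (c : 'I_n -> int) P :
  map_point (ec_lincomb f c P) = ec_lincomb d c (map_point \o P).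
Proof.
rewrite /ec_lincomb; elim: (enum 'I_n) => [|i s IHs] //=.
by rewrite map_point_add IHs map_point_mul.
Qed.

Lemma rank_ge_map n : rank_ge F f n -> rank_ge F d n.
Proof.
case=> P [P_on_curve P_indep]; exists (map_point \o P); split.
  by move=> i; exact: map_point_on_curve.
move=> c c_rel; apply: P_indep.
by move: c_rel; rewrite -map_point_lincomb; case: (ec_lincomb f c P).
Qed.

End MapPoint.

Section Substitution.
Variables (F : fieldType) (e : nat).
Hypothesis e_gt0 : (0 < e)%N.

Definition subst_Xn : {rmorphism {poly F} -> ratfun F} :=
  @FracField.tofrac {poly F} \o comp_poly 'X^e.

Lemma subst_Xn_inj : injective subst_Xn.
Proof.
move=> p q /eqP; rewrite /= tofrac_eq -subr_eq0 -comp_polyB comp_poly_eq0.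
  by rewrite subr_eq0 => /eqP.
by rewrite size_polyXn ltnS.
Qed.

Definition subst_tvar_pow : ratfun F -> ratfun F := frac_lift subst_Xn.
HB.instance Definition _ := GRing.isZmodMorphism.Build _ _ subst_tvar_pow
  (frac_lift_is_zmod_morphism subst_Xn_inj).
HB.instance Definition _ := GRing.isMonoidMorphism.Build _ _ subst_tvar_pow
  (frac_lift_is_monoid_morphism subst_Xn_inj).

Lemma subst_tvar_powE : subst_tvar_pow (tvar F) = tvar F ^+ e.
Proof.
rewrite /subst_tvar_pow (frac_lift_tofrac subst_Xn_inj) /=.
by rewrite (comp_polyX ('X^e : {poly F})) rmorphXn.
Qed.

Lemma a6_mul_rmorphism f :
  exists sigma : {rmorphism ratfun F -> ratfun F}, sigma (a6 F f) = a6 F (e * f).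
Proof.
exists subst_tvar_pow.
by rewrite /a6 rmorphN rmorphXn /= subst_tvar_powE exprM.
Qed.

End Substitution.

Theorem lemma6 (F : finFieldType) (f d : nat) :
  (0 < f)%N -> (0 < d)%N -> (f %| d)%N ->
  forall n : nat, rank_ge F f n -> rank_ge F d n.
Proof.
move=> f_gt0 d_gt0 f_dvd_d.
have e_gt0 : (0 < d %/ f)%N by rewrite divn_gt0 // dvdn_leq.
have [sigma sigma_a6] := a6_mul_rmorphism F e_gt0 f.
by rewrite -(divnK f_dvd_d); exact: rank_ge_map sigma_a6.
Qed.
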